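(* Let $(k,\alpha)\in\Upsilon$, $u\in\operatorname{rext}(L_{k,\alpha})$ and $x\in\Sigma_k$. Then there is $\bar u\in\operatorname{rext}(u,L_{k,\alpha})$ such that the letter $x$ is a recurrent factor of $\bar u$.
   Context: $\Sigma_k$ is an alphabet with $k$ letters. For a nonempty finite word $r$ and a rational $\beta\ge 1$ with $\beta|r|$ an integer, the $\beta$-power $r^\beta$ is the word $rr\cdots rt$ of length $\beta|r|$, where $t$ is a prefix of $r$. For rational $\alpha\ge1$, a word is $\alpha$-power free if it has no factor that is a $\beta$-power with $\beta\ge\alpha$, and $\alpha^+$-power free if it has no factor that is a $\beta$-power with $\beta>\alpha$; ''$\alpha$'' may denote a rational number or a symbol $\alpha^+$. $L_{k,\alpha}$ is the set of finite $\alpha$-power free words over $\Sigma_k$. $\Upsilon$ is the set of pairs: $(k,\alpha)$ with $k=3$ and rational $\alpha>2$; $(k,\alpha)$ with $k>3$ and rational $\alpha\ge2$; $(k,\alpha^+)$ with $k\ge3$ and rational $\alpha\ge2$. A word $w\in L$ is right extendable in $L$ if for every $n$ there is $v\in L$ with $|v|=n$ and $wv\in L$; $\operatorname{rext}(L)$ is the set of such words, and for $u\in\operatorname{rext}(L)$, $\operatorname{rext}(u,L)$ is the set of right infinite words all of whose finite prefixes lie in $L$ and which have $u$ as a prefix. A factor is recurrent in an infinite word if it occurs infinitely often. *)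

From HB Require Import structures.
From mathcomp Require Import all_boot all_order all_algebra.
Set Implicit Arguments. Unset Strict Implicit. Unset Printing Implicit Defensive.
Import Order.TTheory GRing.Theory Num.Theory.

Definition word (k : nat) := seq 'I_k.

Definition infword (k : nat) := nat -> 'I_k.

Definition iprefix k (w : infword k) (n : nat) : word k := mkseq w n.

Definition factor k (f w : word k) : Prop := exists s t : word k, w = s ++ f ++ t.

(* w = r^beta with beta = |w|/|r| >= 1, i.e. w = r r ... r t with t a prefix of r:
   r nonempty, |r| <= |w|, and the i-th letter of w is the (i mod |r|)-th letter of r. *)
Definition is_power_of k (w r : word k) : Prop :=
  0 < size r /\ size r <= size w /\
  forall (i : nat) (x0 : 'I_k), i < size w -> nth x0 w i = nth x0 r (i %% size r).

Definition exponent k (w r : word k) : rat := ((size w)%:R / (size r)%:R)%R.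

(* An exponent "alpha" is a rational a together with a flag [plus]:
   plus = false means alpha = a, plus = true means alpha = a^+. *)
Definition power_free k (a : rat) (plus : bool) (w : word k) : Prop :=
  forall f r : word k, factor f w -> is_power_of f r ->
    if plus then (exponent f r <= a)%R else (exponent f r < a)%R.

Definition inL k (a : rat) (plus : bool) (w : word k) : Prop := power_free a plus w.

Definition rext k (a : rat) (plus : bool) (w : word k) : Prop :=
  inL a plus w /\
  forall n : nat, exists v : word k, size v = n /\ inL a plus (w ++ v).

Definition rext_of k (a : rat) (plus : bool) (u : word k) (ubar : infword k) : Prop :=
  (forall n : nat, inL a plus (iprefix ubar n)) /\ iprefix ubar (size u) = u.

Definition recurrent_letter k (x : 'I_k) (ubar : infword k) : Prop :=
  forall N : nat, exists i : nat, N <= i /\ ubar i = x.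

Definition Upsilon (k : nat) (a : rat) (plus : bool) : Prop :=
  (k = 3 /\ plus = false /\ (2 < a)%R) \/
  (3 < k /\ plus = false /\ (2 <= a)%R) \/
  (3 <= k /\ plus = true /\ (2 <= a)%R).

From mathcomp Require Import all_boot all_order all_algebra.
From mathcomp Require Import zify.
From Stdlib Require Import Classical ClassicalEpsilon.
Set Implicit Arguments. Unset Strict Implicit. Unset Printing Implicit Defensive.
Import Order.TTheory GRing.Theory Num.Theory.

(* Every extendable word [w] is a prefix of an infinite alpha-power free word
   [z] (Koenig's lemma).  If [x] occurs in [z] after [w], cutting [z] just
   after that occurrence extends [w] by a block ending in [x].  Otherwise [x]
   occurs in [z] only up to a last position [q]; overwrite a far away letter
   [z_j] by [x], choosing [j] with [z_(j+1) <> z_(q+1)] (possible since a power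
   free word is not eventually constant).  A factor through [j] of exponent at
   least [alpha >= 2] has a period [R] with [j - R] an occurrence of [x], hence
   [j - R <= q]; then either [q + R] is a late occurrence of [x], or
   [j - R = q] and [z_(q+1) = z_(j+1)].  So the new word is still power free.
   Iterating and passing to the limit puts infinitely many [x] in the word. *)

Definition extendable k (a : rat) (plus : bool) (w : word k) : Prop :=
  forall n, exists v : word k, size v = n /\ inL a plus (w ++ v).

Definition ipower_free k (a : rat) (plus : bool) (z : infword k) : Prop :=
  forall n, inL a plus (iprefix z n).

Definition set_at (T : Type) (z : nat -> T) (j : nat) (x : T) : nat -> T :=
  fun i => if i == j then x else z i.

Lemma eq_in_mkseq (T : Type) (f g : nat -> T) n :
  (forall i, i < n -> f i = g i) -> mkseq f n = mkseq g n.
Proof. by move=> Hfg; apply/eq_in_map => i; rewrite mem_iota => /andP[_ /Hfg]. Qed.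

Lemma iprefixD k (z : infword k) m n :
  iprefix z (m + n) = iprefix z m ++ iprefix (fun i => z (m + i)) n.
Proof.
by rewrite /iprefix /mkseq iotaD map_cat add0n -{2}(addn0 m) iotaDl -map_comp.
Qed.

Lemma shift_factor_iprefix k (z : infword k) s n m : s + n <= m ->
  factor (iprefix (fun i => z (s + i)) n) (iprefix z m).
Proof.
move=> Hm; exists (iprefix z s), (iprefix (fun i => z (s + n + i)) (m - s - n)).
have Em : s + (n + (m - s - n)) = m by lia.
rewrite -{1}Em !iprefixD; congr (_ ++ (_ ++ _)).
by apply: eq_in_mkseq => i _; rewrite addnA.
Qed.

Lemma factor_iprefix_shift k (z : infword k) m f : factor f (iprefix z m) ->
  exists s, s + size f <= m /\ f = iprefix (fun i => z (s + i)) (size f).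
Proof.
move=> [s [t E]]; exists (size s).
have Hsz : size s + (size f + size t) = m.
  by move: (congr1 size E); rewrite size_mkseq !size_cat => ->.
split; first lia.
have -> : f = take (size f) (drop (size s) (iprefix z m)).
  by rewrite E drop_size_cat // take_size_cat.
by rewrite -Hsz !iprefixD drop_size_cat ?size_mkseq // take_size_cat ?size_mkseq.
Qed.

Lemma power_period k (f r : word k) x0 i : is_power_of f r ->
  i + size r < size f -> nth x0 f i = nth x0 f (i + size r).
Proof. by move=> [Hr [Hrf Hf]] Hi; rewrite !Hf ?modnDr //; lia. Qed.

Lemma exponent_ge2_size k (a : rat) (f r : word k) :
  (2 <= a)%R -> (a <= exponent f r)%R -> 0 < size r -> 2 * size r <= size f.
Proof.
move=> Ha Hae Hr.
have : (2%:R <= (size f)%:R / (size r)%:R :> rat)%R by exact: le_trans Hae.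
by rewrite ler_pdivlMr ?ltr0n // -natrM ler_nat.
Qed.

Lemma last_occurrence (T : eqType) (z : nat -> T) x N :
  exists q, forall p, p < N -> z p = x -> p <= q /\ z q = x.
Proof.
elim: N => [|N [q Hq]]; first by exists 0.
have [HN|HN] := eqVneq (z N) x; first by exists N.
exists q => p; rewrite ltnS leq_eqVlt => /orP[/eqP-> HNx|/Hq//].
by rewrite HNx eqxx in HN.
Qed.

Lemma dependent_chain (T : Type) (P Q : seq T -> Prop) (u : seq T) :
  P u -> (forall v, P v -> exists t, Q t /\ P (v ++ t)) ->
  exists W t : nat -> seq T, W 0 = u /\ (forall n, W n.+1 = W n ++ t n) /\
    (forall n, P (W n) /\ Q (t n)).
Proof.
move=> Pu step.
have choice v : exists t, P v -> Q t /\ P (v ++ t).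
  by have [/step[t Ht]|nPv] := classic (P v); [exists t | exists [::] => /nPv].
pose next v := proj1_sig (constructive_indefinite_description _ (choice v)).
have nextP v : P v -> Q (next v) /\ P (v ++ next v).
  by rewrite /next; case: constructive_indefinite_description.
pose W := nat_rect (fun _ => seq T) u (fun _ v => v ++ next v).
exists W, (fun n => next (W n)); split=> //; split=> // n.
suff PW : P (W n) by have [] := nextP _ PW.
by elim: n => //= n IH; have [] := nextP _ IH.
Qed.

Section ChainLimit.

Variables (T : Type) (x0 : T) (W t : nat -> seq T).
Hypothesis W_succ : forall n, W n.+1 = W n ++ t n.
Hypothesis t_neq0 : forall n, 0 < size (t n).

Lemma chain_size n : n <= size (W n).
Proof. by elim: n => // n IH; rewrite W_succ size_cat; have := t_neq0 n; lia. Qed.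

Lemma chain_prefix m d : exists s, W (m + d) = W m ++ s.
Proof.
elim: d => [|d [s Hs]]; first by exists [::]; rewrite addn0 cats0.
by exists (s ++ t (m + d)); rewrite addnS W_succ Hs catA.
Qed.

Definition chain_limit i := nth x0 (W i.+1) i.

Lemma chain_limitE n i : i < size (W n) -> chain_limit i = nth x0 (W n) i.
Proof.
move=> Hi; have [[s1 E1] [s2 E2]] := (chain_prefix n i.+1, chain_prefix i.+1 n).
have E : W i.+1 ++ s2 = W n ++ s1 by rewrite -E1 -E2 addnC.
have := congr1 (fun s => nth x0 s i) E.
by rewrite !nth_cat Hi (chain_size i.+1).
Qed.

Lemma chain_limit_prefix n : mkseq chain_limit (size (W n)) = W n.
Proof.
apply: (@eq_from_nth _ x0); rewrite size_mkseq // => i Hi.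
by rewrite nth_mkseq // (chain_limitE Hi).
Qed.

Lemma take_chain_limit n : mkseq chain_limit n = take n (W n).
Proof.
have Hn := chain_size n.
apply: (@eq_from_nth _ x0); rewrite size_mkseq ?size_takel // => i Hi.
by rewrite nth_mkseq // nth_take // (chain_limitE (leq_trans Hi Hn)).
Qed.

End ChainLimit.

Section PowerFree.

Variables (k : nat) (a : rat) (plus : bool).

Lemma inL_catl (s t : word k) : inL a plus (s ++ t) -> inL a plus s.
Proof.
move=> Hst f r [s1 [t1 Es]]; apply: Hst; exists s1, (t1 ++ t).
by rewrite Es -!catA.
Qed.

Lemma inL_take (w : word k) n : inL a plus w -> inL a plus (take n w).
Proof. by rewrite -{1}(cat_take_drop n w); apply: inL_catl. Qed.

Lemma ipower_free_not_eventually_constant (z : infword k) N c :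
  ipower_free a plus z -> exists i, N <= i /\ z i != c.
Proof.
move=> Hz; apply: NNPP => Hconst.
have Hc i : N <= i -> z i = c.
  move=> Hi; apply/eqP; apply: NNPP => Hne; apply: Hconst.
  by exists i; split=> //; apply/negP.
pose M := (Num.Def.archi_bound `|a|).+1.
have HaM : (a < M%:R)%R.
  apply: le_lt_trans (ler_norm a) _.
  by apply: lt_le_trans (archi_boundP (normr_ge0 a)) _; rewrite ler_nat.
have Hpow : is_power_of (iprefix (fun i => z (N + i)) M) [:: c].
  split=> //; split; first by rewrite size_mkseq.
  move=> i x0; rewrite size_mkseq => Hi.
  by rewrite nth_mkseq // modn1 /= Hc // leq_addr.
have := Hz (N + M) _ _ (shift_factor_iprefix z (leqnn (N + M))) Hpow.
rewrite /exponent size_mkseq /= divr1.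
by case: plus {Hz} => [/(lt_le_trans HaM)|/(lt_trans HaM)]; rewrite ltxx.
Qed.

Lemma extendable_inL (w : word k) : extendable a plus w -> inL a plus w.
Proof. by move=> /(_ 0)[v [/size0nil-> ]]; rewrite cats0. Qed.

(* Each letter [c] for which [w c] is not extendable has a length [N c] of
   impossible extensions; then [w] itself has no extension of length
   [1 + max_c N c]. *)
Lemma extendable_rcons (w : word k) :
  extendable a plus w -> exists c, extendable a plus (w ++ [:: c]).
Proof.
move=> Hw; apply: NNPP => Hnone.
have bound c : exists n,
    ~ exists v : word k, size v = n /\ inL a plus ((w ++ [:: c]) ++ v).
  apply: NNPP => Hall; apply: Hnone; exists c => n.
  by apply: NNPP => Hn; apply: Hall; exists n.
pose N c := proj1_sig (constructive_indefinite_description _ (bound c)).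
have HN c : ~ exists v : word k, size v = N c /\ inL a plus ((w ++ [:: c]) ++ v).
  by rewrite /N; case: constructive_indefinite_description.
have [[|c v] [Hv Hcv]] := Hw (\max_(c : 'I_k) N c).+1; first by [].
move: Hv => [Hv].
apply: (HN c); exists (take (N c) v); split.
  by rewrite size_takel // Hv; apply: leq_bigmax_cond.
by apply: (@inL_catl _ (drop (N c) v)); rewrite -catA cat_take_drop -catA.
Qed.

Lemma iprefix_extendable (z : infword k) m :
  ipower_free a plus z -> extendable a plus (iprefix z m).
Proof.
move=> Hz n; exists (iprefix (fun i => z (m + i)) n).
by split; [exact: size_mkseq | rewrite -iprefixD].
Qed.

Lemma extendable_of_occurrence (z : infword k) (w : word k) j x :
  ipower_free a plus z -> iprefix z (size w) = w -> size w <= j -> z j = x ->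
  exists y, extendable a plus (w ++ y ++ [:: x]).
Proof.
move=> Hz Hzw Hj <-; exists (iprefix (fun i => z (size w + i)) (j - size w)).
rewrite -{1}Hzw catA -iprefixD (subnKC Hj) cats1 -mkseqS.
exact: (iprefix_extendable j.+1 Hz).
Qed.

Lemma chain_limit_extends (x0 : 'I_k) (W t : nat -> word k) :
  (forall n, W n.+1 = W n ++ t n) -> (forall n, 0 < size (t n)) ->
  (forall n, extendable a plus (W n)) ->
  ipower_free a plus (chain_limit x0 W) /\
  iprefix (chain_limit x0 W) (size (W 0)) = W 0.
Proof.
move=> WS Ht HW; split; last exact: chain_limit_prefix WS Ht 0.
move=> n; rewrite /iprefix (take_chain_limit x0 WS Ht).
by apply/inL_take/extendable_inL.
Qed.

Lemma ipower_free_of_extendable (w : word k) (x0 : 'I_k) :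
  extendable a plus w -> exists z, ipower_free a plus z /\ iprefix z (size w) = w.
Proof.
move=> Hw.
have step v : extendable a plus v ->
    exists t : word k, size t = 1 /\ extendable a plus (v ++ t).
  by move=> /extendable_rcons[c Hc]; exists [:: c].
have [W [t [<- [WS HWt]]]] := dependent_chain Hw step.
have Ht n : 0 < size (t n) by have [_ ->] := HWt n.
exists (chain_limit x0 W); apply: chain_limit_extends WS Ht _ => n.
by have [] := HWt n.
Qed.

Section SetLetter.

Variables (z : infword k) (x : 'I_k) (q j : nat).
Hypothesis last_x : forall p, z p = x -> p <= q /\ z q = x.
Hypothesis far_j : 2 * q.+1 <= j.
Hypothesis next_j : z j.+1 != z q.+1.

Lemma set_at_aperiodic s e R : s <= j < e -> 0 < R -> s + 2 * R <= e ->
  ~ (forall i, s <= i -> i + R < e -> set_at z j x i = set_at z j x (i + R)).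
Proof.
move=> /andP[Hsj Hje] HR HsR Hper.
have early_x i : z i = x -> i <= q by case/last_x.
have Hper_z i : s <= i -> i + R < e -> i <> j -> i + R <> j -> z i = z (i + R).
  move=> Hs He Hi HiR; have := Hper i Hs He.
  by rewrite /set_at (introF eqP Hi) (introF eqP HiR).
have Hej : e <= j + R.
  rewrite leqNgt; apply/negP => He; have := Hper j Hsj He.
  rewrite /set_at eqxx ifF; last by apply/eqP; lia.
  by move=> /esym/early_x; lia.
have [Hpq Hqx] : j - R <= q /\ z q = x.
  apply: last_x; have := Hper (j - R) ltac:(lia) ltac:(lia).
  by rewrite /set_at ifF ?subnK ?eqxx //; [lia | apply/eqP; lia].
have [Hlt|Heq] : j - R < q \/ j - R = q by lia.
  have := Hper_z q ltac:(lia) ltac:(lia) ltac:(lia) ltac:(lia).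
  by rewrite Hqx => /esym/early_x; lia.
have := Hper_z q.+1 ltac:(lia) ltac:(lia) ltac:(lia) ltac:(lia).
have -> : q.+1 + R = j.+1 by lia.
by move=> Ez; move: next_j; rewrite Ez eqxx.
Qed.

Lemma ipower_free_set_at : (2 <= a)%R ->
  ipower_free a plus z -> ipower_free a plus (set_at z j x).
Proof.
move=> Ha Hz m f r Hfm Hp.
have [s [Hsm Hf]] := factor_iprefix_shift Hfm.
have [Hsj|Hsj] := boolP (s <= j < s + size f).
  have Hlt : (exponent f r < a)%R.
    rewrite ltNge; apply/negP => Hae; have [Hr _] := Hp.
    apply: (set_at_aperiodic Hsj Hr).
      by rewrite leq_add2l; exact: exponent_ge2_size Hae Hr.
    move=> i Hsi Hie.
    have := power_period x (i := i - s) Hp ltac:(lia).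
    rewrite Hf !nth_mkseq; try lia.
    by rewrite subnKC // addnA subnKC.
  by case: plus {Hz} => //; exact: ltW.
apply: (Hz m f r) => //; rewrite Hf.
have -> : iprefix (fun i => set_at z j x (s + i)) (size f)
        = iprefix (fun i => z (s + i)) (size f).
  by apply: eq_in_mkseq => i Hi; rewrite /set_at ifF //; apply/eqP; lia.
exact: shift_factor_iprefix.
Qed.

End SetLetter.

Lemma extendable_append_letter (w : word k) (x : 'I_k) : (2 <= a)%R ->
  extendable a plus w -> exists y, extendable a plus (w ++ y ++ [:: x]).
Proof.
move=> Ha /(ipower_free_of_extendable x)[z [Hz Hzw]].
have [[j [Hj Hzj]]|Hlate] := classic (exists j, size w <= j /\ z j = x).
  exact: extendable_of_occurrence Hz Hzw Hj Hzj.
have [q Hq] := last_occurrence z x (size w).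
have last_x p : z p = x -> p <= q /\ z q = x.
  move=> Hp; apply: (Hq p _ Hp); rewrite ltnNge; apply/negP => Hwp.
  by apply: Hlate; exists p.
have [j [Hj Hjq]] : exists j, 2 * q.+1 + size w <= j /\ z j.+1 != z q.+1.
  have [i [Hi Hiq]] :=
    ipower_free_not_eventually_constant (2 * q.+1 + size w).+1 (z q.+1) Hz.
  by exists i.-1; rewrite prednK; [split=> //; lia | lia].
apply: (@extendable_of_occurrence (set_at z j x) _ j).
- by apply: (ipower_free_set_at last_x _ Hjq Ha Hz); lia.
- rewrite -[RHS]Hzw; apply: eq_in_mkseq => i Hi.
  by rewrite /set_at ifF //; apply/eqP; lia.
- lia.
- by rewrite /set_at eqxx.
Qed.

End PowerFree.

Theorem mainTheorem9 (k : nat) (a : rat) (plus : bool) (u : word k) (x : 'I_k) :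
  Upsilon k a plus -> rext a plus u ->
  exists ubar : infword k, rext_of a plus u ubar /\ recurrent_letter x ubar.
Proof.
move=> HU [_ Hu].
have Ha : (2 <= a)%R by case: HU => [[_ [_ /ltW]]|[[_ [_]]|[_ [_]]]].
have step v : extendable a plus v ->
    exists t : word k, (exists y, t = y ++ [:: x]) /\ extendable a plus (v ++ t).
  move=> /(extendable_append_letter x Ha)[y Hy].
  by exists (y ++ [:: x]); split; [exists y|].
have [W [t [W0 [WS HWt]]]] := dependent_chain Hu step.
have Ht n : 0 < size (t n) by have [_ [y ->]] := HWt n; rewrite size_cat addn1.
exists (chain_limit x W); split.
  by rewrite -W0; apply: chain_limit_extends WS Ht _ => n; have [] := HWt n.
move=> N; have [_ [y Ey]] := HWt N.
have WN1 : W N.+1 = rcons (W N ++ y) x by rewrite WS Ey catA cats1.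
exists (size (W N ++ y)); split.
  by have := chain_size WS Ht N; rewrite size_cat; lia.
have Hi : size (W N ++ y) < size (W N.+1) by rewrite WN1 size_rcons.
by rewrite (chain_limitE x WS Ht Hi) WN1 nth_rcons ltnn eqxx.
Qed.
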